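(* Let $\mathcal{S} = s_1, s_2, \dots$ be the integer sequence in which $s_i$ is the position of the lowest-order $1$ bit in the binary representation of $i$ (i.e. $s_i = 1 + \nu_2(i)$, where $\nu_2(i)$ is the exponent of $2$ in $i$). Then for all integers $k, r > 0$, \[ \sum_{i=1}^{k} s_i \leq \sum_{i=r}^{r+k-1} s_i . \] That is, the prefix of length $k$ of $\mathcal{S}$ has the smallest sum among all contiguous subsequences of length $k$ of $\mathcal{S}$.
   Context: The sequence $\mathcal{S}$ (the ''ruler function'') begins $1,2,1,3,1,2,1,4,1,2,1,3,1,2,1,5,\dots$; $s_i$ is the number of bits that must be counted from right to left to reach the first $1$ in the binary representation of $i$. *)

From mathcomp Require Import all_boot.

Definition ruler (i : nat) : nat := (logn 2 i).+1.

From mathcomp Require Import all_boot.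

(* The 2-adic valuations of the k consecutive integers q+1, ..., q+k add up to
   the valuation of their product, the falling factorial (q+k)^_k.  This product
   is 'C(q+k, k) * k`!, so it is divisible by k`! = k^_k, the product for q = 0;
   hence no window of length k has a smaller valuation sum than the prefix. *)

Lemma logn_ffact (p q k : nat) :
  logn p ((q + k) ^_ k) = \sum_(q.+1 <= i < (q + k).+1) logn p i.
Proof.
elim: k => [|k IHk]; first by rewrite ffactn0 logn1 addn0 big_geq.
rewrite addnS ffactSS lognM ?ffact_gt0 ?leq_addl // IHk.
by rewrite [in RHS]big_nat_recr ?ltnS ?leq_addr // addnC.
Qed.

Lemma logn_fact_le_ffact (p n k : nat) : k <= n -> logn p k`! <= logn p (n ^_ k).
Proof.
move=> le_kn; apply: dvdn_leq_log; first by rewrite ffact_gt0.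
by rewrite -bin_ffact dvdn_mull.
Qed.

Lemma sum_ruler (q k : nat) :
  \sum_(q.+1 <= i < (q + k).+1) ruler i = k + logn 2 ((q + k) ^_ k).
Proof.
rewrite (eq_bigr (fun i => 1 + logn 2 i)) // big_split /= logn_ffact.
by rewrite sum_nat_const_nat subSS addKn muln1.
Qed.

Theorem lemma1 (k r : nat) (hk : 0 < k) (hr : 0 < r) :
  \sum_(1 <= i < k.+1) ruler i <= \sum_(r <= i < r + k) ruler i.
Proof.
case: r hr => [//|q] _.
have := sum_ruler 0 k; rewrite add0n ffactnn => ->.
by rewrite addSn sum_ruler leq_add2l logn_fact_le_ffact ?leq_addl.
Qed.
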